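(* Let $d\in\mathbb{N}$, let $D_d\subset\mathbb{R}^d$ be bounded with Lebesgue measure $\lambda_d(D_d)=1$, and let $R_d=\operatorname{rad}(D_d)/\sqrt{d}$. Let $K$ be the convex hull of $n$ points $x_1,\dots,x_n\in D_d$ and let $\delta>0$. Then \[ \lambda_d(K_\delta) \,<\, n\, \Bigl((R_d + 2\delta) \sqrt{\tfrac{\pi e}{2}} \Bigr)^d . \]
   Context: For $A\subset\mathbb{R}^d$ and $\delta>0$, $A_\delta=\{x\in\mathbb{R}^d \mid \operatorname{dist}(x,A)\le \delta\sqrt{d}\}$, where $\operatorname{dist}(x,A)=\inf_{a\in A}\|x-a\|_2$. The radius of a set $D\subset\mathbb{R}^d$ is $\operatorname{rad}(D)=\inf_{x\in\mathbb{R}^d}\sup_{y\in D}\|y-x\|_2$. $\lambda_d$ denotes $d$-dimensional Lebesgue measure. *)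

From HB Require Import structures.
From mathcomp Require Import all_boot all_order all_algebra.
From mathcomp Require Import all_classical all_reals all_analysis.
Set Implicit Arguments. Unset Strict Implicit. Unset Printing Implicit Defensive.
Import Order.TTheory GRing.Theory Num.Theory.
Local Open Scope classical_set_scope.
Local Open Scope ring_scope.

Section defs.
Variables (R : realType) (d : nat).

Definition enorm (v : 'rV[R]_d) : R := Num.sqrt (\sum_(i < d) v ord0 i ^+ 2).

Definition box (a b : 'rV[R]_d) : set 'rV[R]_d :=
  [set x | forall i, a ord0 i <= x ord0 i <= b ord0 i].
Definition box_vol (a b : 'rV[R]_d) : R := \prod_(i < d) (b ord0 i - a ord0 i).

(* d-dimensional Lebesgue (outer) measure: infimum of the total volume of
   countable covers by closed boxes. On Lebesgue measurable sets this is the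
   Lebesgue measure lambda_d. *)
Definition leb_outer (A : set 'rV[R]_d) : \bar R :=
  ereal_inf [set s : \bar R | exists (a b : nat -> 'rV[R]_d),
     [/\ (forall k i, a k ord0 i <= b k ord0 i),
         A `<=` \bigcup_k box (a k) (b k) &
         s = (\sum_(0 <= k <oo) (box_vol (a k) (b k))%:E)%E]].

(* dist(x,A) = inf_{a in A} |x - a|  (extended real; +oo if A is empty) *)
Definition edist (x : 'rV[R]_d) (A : set 'rV[R]_d) : \bar R :=
  ereal_inf [set (enorm (x - a))%:E | a in A].

Definition thicken (A : set 'rV[R]_d) (delta : R) : set 'rV[R]_d :=
  [set x | (edist x A <= (delta * Num.sqrt d%:R)%:E)%E].

Definition set_radius (D : set 'rV[R]_d) : \bar R :=
  ereal_inf [set ereal_sup [set (enorm (y - x))%:E | y in D] | x in setT].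

Definition bounded_setE (D : set 'rV[R]_d) : Prop :=
  exists M : R, forall y, D y -> enorm y <= M.

Definition conv_hull (n : nat) (x : 'I_n -> 'rV[R]_d) : set 'rV[R]_d :=
  [set y | exists w : 'I_n -> R, [/\ (forall i, 0 <= w i),
       \sum_(i < n) w i = 1 & y = \sum_(i < n) w i *: x i]].
End defs.

From Pilot Require Import Defs.
From HB Require Import structures.
From mathcomp Require Import all_boot all_order all_algebra.
From mathcomp Require Import all_classical all_reals all_analysis.
From mathcomp Require Import ring lra zify measurable_realfun.
Import Order.TTheory GRing.Theory Num.Theory.
Local Open Scope classical_set_scope.
Local Open Scope ring_scope.
Set Implicit Arguments. Unset Strict Implicit. Unset Printing Implicit Defensive.

(* Let c be an almost optimal centre for D, so that every x_i lies within
   about rad(D) of c. Elekes' lemma: every point of the convex hull K lies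
   within rad(D)/2 of one of the n midpoints (c + x_i)/2, hence K_delta is
   covered by n balls of radius rho ~ rad(D)/2 + delta sqrt d. A ball of
   radius rho is covered by cubes of a fine grid, keeping those whose corner
   nearest to the centre lies in the ball; a Chernoff bound
   1{S <= rho^2} <= exp(t (rho^2 - S)) with t rho^2 = d/2 and a comparison of
   the resulting one-dimensional Gaussian sums with the Gaussian integral
   sqrt pi bound their total volume by (e^(1/2) (sqrt pi - gamma) rho / sqrt(d/2))^d
   for some gamma > 0. This is strictly less than
   (2 rho sqrt(pi e / 2) / sqrt d)^d, which leaves room to absorb the
   approximations. *)

Section euclidean.
Variables (R : realType) (d : nat).
Implicit Types u v : 'rV[R]_d.

Definition sqnorm v : R := \sum_(i < d) v ord0 i ^+ 2.
Definition dotv u v : R := \sum_(i < d) u ord0 i * v ord0 i.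

Lemma sqnorm_ge0 v : 0 <= sqnorm v.
Proof. by apply: sumr_ge0 => i _; exact: sqr_ge0. Qed.

Lemma enorm_ge0 v : 0 <= enorm v.
Proof. exact: sqrtr_ge0. Qed.

Lemma sqr_enorm v : enorm v ^+ 2 = sqnorm v.
Proof. by rewrite /enorm sqr_sqrtr // sqnorm_ge0. Qed.

Lemma enorm_le v a : 0 <= a -> sqnorm v <= a ^+ 2 -> enorm v <= a.
Proof.
move=> a0 h; rewrite /enorm -[X in _ <= X](ger0_norm a0) -sqrtr_sqr.
by rewrite ler_sqrt // ?sqr_ge0.
Qed.

Lemma sqnorm_le v a : enorm v <= a -> sqnorm v <= a ^+ 2.
Proof.
move=> h; rewrite -sqr_enorm; apply: lerXn2r => //; rewrite ?nnegrE ?enorm_ge0 //.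
exact: le_trans (enorm_ge0 v) h.
Qed.

Lemma sqnorm_dotv v : sqnorm v = dotv v v.
Proof. by apply: eq_bigr => i _; rewrite expr2. Qed.

Lemma dotv_sqr_le u v : dotv u v ^+ 2 <= sqnorm u * sqnorm v.
Proof.
set a := fun i => u ord0 i; set b := fun i => v ord0 i.
have lagrange : \sum_(i < d) \sum_(j < d) (a i * b j - a j * b i) ^+ 2 =
                2 * (sqnorm u * sqnorm v - dotv u v ^+ 2).
  transitivity (\sum_(i < d) \sum_(j < d)
     ((a i ^+ 2 * b j ^+ 2 + b i ^+ 2 * a j ^+ 2) - 2 * ((a i * b i) * (a j * b j)))).
    by apply: eq_bigr => i _; apply: eq_bigr => j _; ring.
  under eq_bigr do rewrite sumrB big_split /= -!mulr_sumr.
  rewrite sumrB big_split /= -!mulr_suml -mulr_sumr -mulr_suml.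
  rewrite /sqnorm /dotv -/a -/b; ring.
have : 0 <= 2 * (sqnorm u * sqnorm v - dotv u v ^+ 2).
  by rewrite -lagrange; apply: sumr_ge0 => i _; apply: sumr_ge0 => j _; exact: sqr_ge0.
by rewrite pmulr_rge0 // subr_ge0.
Qed.

Lemma sqnormD u v : sqnorm (u + v) = sqnorm u + 2 * dotv u v + sqnorm v.
Proof.
rewrite /sqnorm /dotv mulr_sumr -!big_split /=; apply: eq_bigr => i _.
rewrite mxE; ring.
Qed.

Lemma enormD u v : enorm (u + v) <= enorm u + enorm v.
Proof.
have huv : dotv u v <= enorm u * enorm v.
  rewrite -(ger0_norm (enorm_ge0 u)) -(ger0_norm (enorm_ge0 v)) -normrM.
  apply: le_trans (ler_norm _) _.
  rewrite -ler_sqr ?nnegrE ?normr_ge0 //.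
  by rewrite !real_normK ?num_real // exprMn !sqr_enorm dotv_sqr_le.
apply: enorm_le; first by rewrite addr_ge0 // enorm_ge0.
rewrite sqnormD sqrrD !sqr_enorm mulr2n; lra.
Qed.

Lemma dotv_sumr n (p : 'rV[R]_d) (w : 'I_n -> R) (q : 'I_n -> 'rV[R]_d) :
  dotv p (\sum_i w i *: q i) = \sum_i w i * dotv p (q i).
Proof.
rewrite /dotv; under eq_bigr do rewrite summxE mulr_sumr.
rewrite exchange_big /=; apply: eq_bigr => i _; rewrite mulr_sumr.
by apply: eq_bigr => j _; rewrite mxE mulrCA.
Qed.

Lemma sqnormB_half u v : sqnorm (u - 2^-1 *: v) = sqnorm u - dotv u v + sqnorm v / 4.
Proof.
rewrite /sqnorm /dotv -sumrB mulr_suml -big_split /=; apply: eq_bigr => i _.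
by rewrite !mxE; field.
Qed.

(* Elekes' lemma. Writing y = c + p, choose i maximising <p, x_i - c>; then
   |p|^2 <= <p, x_i - c>, which is |y - (c + x_i)/2|^2 <= |x_i - c|^2 / 4. *)
Lemma conv_hull_near_midpoint n (x : 'I_n -> 'rV[R]_d) (c y : 'rV[R]_d) (r : R) :
  (forall i, enorm (x i - c) <= r) -> conv_hull x y ->
  exists i, enorm (y - 2^-1 *: (c + x i)) <= r / 2.
Proof.
move=> hx [w [w0 w1 ->]].
case: n x w w0 w1 hx => [|n] x w w0 w1 hx.
  by move: w1; rewrite big_ord0 => /esym/eqP; rewrite oner_eq0.
have r0 : 0 <= r by apply: le_trans (hx ord0); exact: enorm_ge0.
pose q i := x i - c.
pose p := \sum_i w i *: q i.
have yE : \sum_i w i *: x i = c + p.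
  rewrite /p /q; apply/rowP => j; rewrite !(mxE, summxE).
  under eq_bigr do rewrite mxE.
  under [X in _ = _ + X]eq_bigr do rewrite mxE mxE mxE mulrBr.
  by rewrite sumrB -mulr_suml w1 mul1r addrC subrK.
have [i _ imax] := @arg_maxP _ _ _ ord0 predT (fun i => dotv p (q i)) isT.
exists i.
have -> : \sum_i w i *: x i - 2^-1 *: (c + x i) = p - 2^-1 *: q i.
  by rewrite yE /q; apply/rowP => j; rewrite !mxE; lra.
apply: enorm_le; first by rewrite divr_ge0.
rewrite sqnormB_half.
have hp : sqnorm p <= dotv p (q i).
  rewrite sqnorm_dotv {2}/p dotv_sumr.
  apply: le_trans (_ : \sum_j w j * dotv p (q i) <= _); last first.
    by rewrite -mulr_suml w1 mul1r.
  by apply: ler_sum => j _; apply: ler_wpM2l => //; exact: imax.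
have hq : sqnorm (q i) <= r ^+ 2 by apply: sqnorm_le; exact: hx.
have := sqnorm_ge0 p; lra.
Qed.

End euclidean.

Lemma exists_mul_slack (R : realFieldType) (a b r : R) : 0 <= a -> a < b -> 0 < r ->
  exists2 e, 0 < e & a * (r + e) < b * r.
Proof.
move=> a0 ab r0; have b0 : 0 < b := le_lt_trans a0 ab.
have ba0 : 0 < (b - a) * r by rewrite mulr_gt0 // subr_gt0.
exists ((b - a) * r / b); first by rewrite divr_gt0.
rewrite mulrDr mulrCA.
have : (b - a) * r * (a / b) < (b - a) * r by rewrite gtr_pMr // ltr_pdivrMr // mul1r.
lra.
Qed.

Section gauss_sums.
Variable R : realType.
Let mu := @lebesgue_measure R.

Lemma gauss_fun_le (x y : R) : 0 <= x -> x <= y -> gauss_fun y <= gauss_fun x.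
Proof.
move=> x0 xy; rewrite /gauss_fun ler_expR lerN2.
by rewrite lerXn2r // ?nnegrE //; apply: le_trans xy.
Qed.

Lemma sqrt_pi_gt1 : 1 < Num.sqrt (pi : R).
Proof. by rewrite -sqrtr1 ltr_sqrt //; apply: lt_le_trans (pi_ge2 R); lra. Qed.

Lemma gauss_funN (x : R) : gauss_fun (- x) = gauss_fun x.
Proof. by rewrite /gauss_fun sqrrN. Qed.

Lemma disjoint_itv_cc_oc (a b c : R) : [disjoint `[a, b] & `]b, c]]%classic.
Proof.
apply/disj_setPS => x [] /=; rewrite !in_itv /= => /andP[_ xb] /andP[bx _].
by move: (lt_le_trans bx xb); rewrite ltxx.
Qed.

Lemma gauss_integral_itv_ge (a b : R) : 0 <= a -> a <= b ->
  (((b - a) * gauss_fun b)%:E <= \int[mu]_(x in `]a, b]) (gauss_fun x)%:E)%E.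
Proof.
move=> a0 ab.
apply: (@le_trans _ _ (\int[mu]_(x in `]a, b]) (cst (gauss_fun b)%:E x))%E).
  rewrite integral_cst //= /mu lebesgue_measure_itv /= lte_fin.
  case: ltP => h; first by rewrite -EFinD -EFinM mulrC.
  by rewrite mule0 (_ : b - a = 0) ?mul0r //; apply/eqP; rewrite subr_eq0 eq_le ab h.
apply: ge0_le_integral => //.
- by move=> x _; rewrite lee_fin gauss_fun_ge0.
- by apply/measurable_EFinP/measurable_funTS; exact: measurable_gauss_fun.
move=> x /=; rewrite in_itv /= => /andP[ax xb]; rewrite lee_fin.
by apply: gauss_fun_le => //; apply: le_trans (ltW ax).
Qed.

Lemma gauss_riemann_sum_le (s : R) (K : nat) : 0 < s ->
  ((\sum_(j < K) s * gauss_fun (j.+1%:R * s))%:E <=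
   \int[mu]_(x in `[0%R, (K%:R * s)%R]) (gauss_fun x)%:E)%E.
Proof.
move=> s0; elim: K => [|K IH].
  by rewrite big_ord0; apply: integral_ge0 => x _; rewrite lee_fin gauss_fun_ge0.
have KS : 0 <= K%:R * s by rewrite mulr_ge0 // ltW.
rewrite big_ord_recr /= EFinD.
rewrite (@itv_bndbnd_setU _ _ (BLeft 0) (BRight (K%:R * s)) (BRight (K.+1%:R * s))); last 2 first.
- by rewrite bnd_simp.
- by rewrite bnd_simp ler_pM2r // ler_nat.
rewrite ge0_integral_setU //=.
- apply: leeD => //.
  have := @gauss_integral_itv_ge (K%:R * s) (K.+1%:R * s) KS.
  rewrite ler_pM2r // ler_nat leqnSn => /(_ isT).
  by rewrite -mulrBl -natrB // subSnn mul1r.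
- by apply/measurable_EFinP/measurable_funTS; exact: measurable_gauss_fun.
- by move=> x _; rewrite lee_fin gauss_fun_ge0.
- exact: disjoint_itv_cc_oc.
Qed.

Lemma gauss_riemann_sum_tail_le (s : R) (K : nat) : 0 < s ->
  \sum_(j < K) s * gauss_fun (j.+1%:R * s) + gauss_fun (K%:R * s + 1)
   <= Num.sqrt pi / 2.
Proof.
move=> s0.
have KS : 0 <= K%:R * s by rewrite mulr_ge0 // ltW.
rewrite -lee_fin -integral0y_gauss EFinD.
apply: (@le_trans _ _ (\int[mu]_(x in `[0%R, (K%:R * s)%R] `|` `](K%:R * s)%R, (K%:R * s + 1)%R])
   (gauss_fun x)%:E)%E).
  rewrite ge0_integral_setU //=.
  - apply: leeD; first exact: gauss_riemann_sum_le.
    have := @gauss_integral_itv_ge (K%:R * s) (K%:R * s + 1) KS.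
    by rewrite lerDl ler01 addrAC subrr add0r mul1r => /(_ isT).
  - by apply/measurable_EFinP/measurable_funTS; exact: measurable_gauss_fun.
  - by move=> x _; rewrite lee_fin gauss_fun_ge0.
  - exact: disjoint_itv_cc_oc.
apply: ge0_subset_integral => //=.
- by apply: measurableU.
- by apply/measurable_EFinP/measurable_funTS; exact: measurable_gauss_fun.
- by move=> x _; rewrite lee_fin gauss_fun_ge0.
move=> x [] /=; rewrite !in_itv /= ?andbT; first by case/andP.
by case/andP=> h _; apply: le_trans (ltW h).
Qed.

End gauss_sums.

Section ball_cover.
Variable R : realType.

(* Cell k of the grid of mesh h on [-N h, N h] is [h * cell_lo k, h * (cell_lo k + 1)];
   cell_near k is its endpoint nearest to 0, in units of h. *)
Definition cell_lo N (k : 'I_(N + N)) : R := k%:R - N%:R.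
Definition cell_near N (k : 'I_(N + N)) : R :=
  if (N <= k)%N then k%:R - N%:R else k%:R - N%:R + 1.

Lemma sum_gauss_cell_near N (s : R) :
  \sum_(k < N + N) gauss_fun (s * cell_near k) = 2 * \sum_(j < N) gauss_fun (s * j%:R).
Proof.
rewrite big_split_ord /= mulr2n mulrDl mul1r; congr (_ + _).
  rewrite (reindex_inj rev_ord_inj) /=; apply: eq_bigr => i _.
  have hi : (i < N)%N := ltn_ord i.
  rewrite /cell_near /= ifF; last by apply/negbTE; rewrite -ltnNge; lia.
  rewrite -gauss_funN; congr gauss_fun.
  rewrite natrB; last by lia.
  rewrite -natr1; ring.
by apply: eq_bigr => i _; rewrite /cell_near /= leq_addr natrD; congr gauss_fun; ring.
Qed.

Lemma gauss_cell_sum_le (s t rho : R) (K : nat) : 0 < s -> 0 < t ->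
  K%:R * (s / Num.sqrt t) <= rho ->
  (s / Num.sqrt t) * \sum_(k < K.+1 + K.+1) expR (- t * ((s / Num.sqrt t) * cell_near k) ^+ 2)
  <= (Num.sqrt pi + 2 * s - 2 * gauss_fun (Num.sqrt t * rho + 1)) / Num.sqrt t.
Proof.
move=> s0 t0 hK.
have st0 : 0 < Num.sqrt t by rewrite sqrtr_gt0.
have E k : expR (- t * ((s / Num.sqrt t) * cell_near k) ^+ 2) = gauss_fun (s * cell_near k).
  rewrite /gauss_fun; congr expR.
  by rewrite !exprMn exprVn sqr_sqrtr ?ltW //; field; rewrite gt_eqF.
under eq_bigr do rewrite E.
rewrite sum_gauss_cell_near big_ord_recl /= mulr0 /gauss_fun expr0n /= oppr0 expR0.
rewrite -/(gauss_fun _).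
set S := \sum_(i < K) _.
have hS : s * S + gauss_fun (K%:R * s + 1) <= Num.sqrt pi / 2.
  rewrite /S mulr_sumr.
  apply: le_trans (gauss_riemann_sum_tail_le K s0); rewrite lerD2r le_eqVlt; apply/orP; left.
  by apply/eqP; apply: eq_bigr => i _; rewrite /gauss_fun /bump /= add1n (mulrC s i.+1%:R).
have hG : gauss_fun (Num.sqrt t * rho + 1) <= gauss_fun (K%:R * s + 1).
  apply: gauss_fun_le; first by rewrite addr_ge0 // mulr_ge0 // ltW.
  by rewrite lerD2r; move: hK; rewrite mulrA ler_pdivrMr // (mulrC rho).
rewrite mulrAC ler_pM2r ?invr_gt0 //.
have := sqrtr_ge0 pi; nra.
Qed.

Lemma cell_of_coord N (h rho v : R) : 0 < h -> rho < N%:R * h -> `|v| <= rho ->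
  exists k : 'I_(N + N),
    cell_lo k * h <= v <= (cell_lo k + 1) * h /\ (h * cell_near k) ^+ 2 <= v ^+ 2.
Proof.
move=> h0 hN; rewrite ler_norml => /andP[vlo vhi].
set q := v / h + N%:R.
have hrho : rho / h < N%:R by rewrite ltr_pdivrMr.
have q0 : 0 <= q.
  rewrite /q; have : - rho / h <= v / h by rewrite ler_pM2r ?invr_gt0.
  rewrite mulNr; lra.
have qlt : q < (N + N)%:R.
  rewrite /q natrD; have : v / h <= rho / h by rewrite ler_pM2r ?invr_gt0.
  lra.
have /andP[t1 t2] := truncn_itv q0.
have tlt : (Num.truncn q < N + N)%N by rewrite truncn_lt_nat.
exists (Ordinal tlt).
have vq : v = (q - N%:R) * h by rewrite /q addrK mulfVK // gt_eqF.
rewrite /cell_lo /cell_near /= -natr1 in t2 *.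
split; first by apply/andP; split; rewrite vq ler_pM2r //; lra.
case: ifP => hNq.
  have : N%:R <= (Num.truncn q)%:R :> R by rewrite ler_nat.
  move=> hNq'.
  have a0 : 0 <= h * ((Num.truncn q)%:R - N%:R) by apply: mulr_ge0; [exact: ltW | lra].
  have a1 : h * ((Num.truncn q)%:R - N%:R) <= v by rewrite vq mulrC ler_pM2r //; lra.
  nra.
have : (Num.truncn q)%:R + 1 <= N%:R :> R.
  by rewrite natr1 ler_nat; move/negbT: hNq; rewrite -ltnNge.
move=> hNq'.
have a0 : h * ((Num.truncn q)%:R - N%:R + 1) <= 0 by apply: mulr_ge0_le0; [exact: ltW | lra].
have a1 : v <= h * ((Num.truncn q)%:R - N%:R + 1) by rewrite vq (mulrC h) ler_pM2r //; lra.
nra.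
Qed.

Section ball_in_dim.
Variable d : nat.

Definition grid_lo (m : 'rV[R]_d) (h : R) N (z : {ffun 'I_d -> 'I_(N + N)}) : 'rV[R]_d :=
  \row_j (m ord0 j + h * cell_lo (z j)).
Definition grid_hi (m : 'rV[R]_d) (h : R) N (z : {ffun 'I_d -> 'I_(N + N)}) : 'rV[R]_d :=
  \row_j (m ord0 j + h * (cell_lo (z j) + 1)).
Definition grid_near_ball (h rho : R) N (z : {ffun 'I_d -> 'I_(N + N)}) : bool :=
  \sum_j (h * cell_near (z j)) ^+ 2 <= rho ^+ 2.

Lemma grid_cover (m x : 'rV[R]_d) (rho h : R) N : 0 < h -> rho < N%:R * h ->
  enorm (x - m) <= rho ->
  exists z : {ffun 'I_d -> 'I_(N + N)},
    grid_near_ball h rho z /\ box (grid_lo m h z) (grid_hi m h z) x.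
Proof.
move=> h0 hN hx.
have hs := sqnorm_le hx.
have coord j : `|(x - m) ord0 j| <= rho.
  have rho0 : 0 <= rho by apply: le_trans hx; exact: enorm_ge0.
  rewrite -ler_sqr ?nnegrE ?normr_ge0 // real_normK ?num_real //.
  apply: le_trans hs; rewrite /sqnorm (bigD1 j) //= lerDl.
  by apply: sumr_ge0 => i _; exact: sqr_ge0.
have [f hf] := fin_all_exists (fun j => cell_of_coord h0 hN (coord j)).
exists [ffun j => f j]; split.
  apply: le_trans hs; rewrite /sqnorm; apply: ler_sum => j _.
  by rewrite ffunE; case: (hf j).
move=> j; rewrite !mxE ffunE; case: (hf j); rewrite !mxE => /andP[a b] _.
rewrite -lerBlDl -lerBrDl !(mulrC h); lra.
Qed.

(* Chernoff: on each selected cell, 1 <= exp(t (rho^2 - sum_j (h cell_near)^2)). *)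
Lemma grid_volume_le (rho h t : R) N : 0 <= t -> t * rho ^+ 2 = d%:R / 2 -> 0 <= h ->
  \sum_(z : {ffun 'I_d -> 'I_(N + N)} | grid_near_ball h rho z) h ^+ d <=
  (expR (2^-1) * (h * \sum_(k < N + N) expR (- t * (h * cell_near k) ^+ 2))) ^+ d.
Proof.
move=> t0 trho h0.
have -> : (expR (2^-1) * (h * \sum_(k < N + N) expR (- t * (h * cell_near k) ^+ 2))) ^+ d =
   \prod_(j < d) \sum_(k < N + N) (h * expR (2^-1 - t * (h * cell_near k) ^+ 2)).
  rewrite prodr_const card_ord; congr (_ ^+ _).
  rewrite mulr_sumr mulr_sumr; apply: eq_bigr => k _.
  by rewrite mulrCA expRD mulNr.
rewrite bigA_distr_bigA /= big_mkcond /=.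
apply: ler_sum => z _; case: ifP => hz; last first.
  by apply: prodr_ge0 => j _; rewrite mulr_ge0 // expR_ge0.
rewrite big_split /= prodr_const card_ord -expR_sum.
rewrite -[leLHS]mulr1 ler_wpM2l ?exprn_ge0 //.
apply: le_trans (expR_ge1Dx _); rewrite lerDl.
rewrite sumrB sumr_const card_ord -mulr_sumr subr_ge0.
have := ler_wpM2l t0 hz; rewrite trho => H.
by apply: le_trans H _; rewrite -[2^-1 *+ d]mulr_natr mulrC.
Qed.

Definition gauss_slack : R := gauss_fun (Num.sqrt (d%:R / 2) + 1).
Definition cover_const : R :=
  expR (2^-1) * (Num.sqrt pi - gauss_slack) / Num.sqrt (d%:R / 2).

Lemma cover_const_ge0 : 0 <= cover_const.
Proof.
have g1 : gauss_slack <= 1 := gauss_fun_le1 _.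
have sp1 : 1 < Num.sqrt (pi : R) := sqrt_pi_gt1 R.
rewrite /cover_const; apply: mulr_ge0; last by rewrite invr_ge0 sqrtr_ge0.
by apply: mulr_ge0; [exact: expR_ge0 | lra].
Qed.

Lemma cover_const_lt : (0 < d)%N ->
  cover_const < 2 / Num.sqrt d%:R * Num.sqrt (pi * expR 1 / 2).
Proof.
move=> d0.
have g0 : 0 < gauss_slack := expR_gt0 _.
have g1 : gauss_slack <= 1 := gauss_fun_le1 _.
have sp1 : 1 < Num.sqrt (pi : R) := sqrt_pi_gt1 R.
set g := gauss_slack in g0 g1 *; set sp := Num.sqrt (pi : R) in sp1 *.
have dR : 0 < d%:R :> R by rewrite ltr0n.
rewrite -ltr_sqr ?nnegrE ?cover_const_ge0 //.
have e1 : expR (2^-1 : R) ^+ 2 = expR 1 by rewrite expr2 -expRD; congr expR; field.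
have -> : cover_const ^+ 2 = (2 * expR 1 / d%:R) * (sp - g) ^+ 2.
  rewrite /cover_const -/g -/sp !exprMn exprVn e1 sqr_sqrtr ?divr_ge0 ?ler0n //.
  by field; rewrite gt_eqF.
have -> : (2 / Num.sqrt d%:R * Num.sqrt (pi * expR 1 / 2)) ^+ 2 =
          (2 * expR 1 / d%:R) * sp ^+ 2.
  rewrite !exprMn exprVn !sqr_sqrtr ?ler0n ?pi_ge0 //; last first.
    by rewrite divr_ge0 // mulr_ge0 ?pi_ge0 ?expR_ge0.
  by field; rewrite gt_eqF.
rewrite ltr_pM2l; last by rewrite divr_gt0 ?mulr_gt0 ?expR_gt0.
nra.
Qed.

Lemma grid_ball_cover (m : 'rV[R]_d) (rho h t : R) N : 0 < h -> rho < N%:R * h ->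
  0 <= t -> t * rho ^+ 2 = d%:R / 2 ->
  exists s : seq ('rV[R]_d * 'rV[R]_d),
  [/\ (forall p, p \in s -> forall j, p.1 ord0 j <= p.2 ord0 j),
      (forall x, enorm (x - m) <= rho -> exists2 p, p \in s & box p.1 p.2 x) &
      \sum_(p <- s) box_vol p.1 p.2 <=
        (expR (2^-1) * (h * \sum_(k < N + N) expR (- t * (h * cell_near k) ^+ 2))) ^+ d].
Proof.
move=> h0 hN t0 trho.
pose cells := enum [pred z : {ffun 'I_d -> 'I_(N + N)} | grid_near_ball h rho z].
exists [seq (grid_lo m h z, grid_hi m h z) | z <- cells]; split.
- by move=> p /mapP[z _ ->] j /=; rewrite !mxE lerD2l ler_pM2l //; lra.
- move=> x /(grid_cover h0 hN)[z [hz hb]].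
  by exists (grid_lo m h z, grid_hi m h z) => //; apply: map_f; rewrite mem_enum inE.
have vol z : box_vol (grid_lo m h z) (grid_hi m h z) = h ^+ d.
  rewrite /box_vol (eq_bigr (fun _ => h)); first by rewrite prodr_const card_ord.
  by move=> j _; rewrite !mxE; ring.
rewrite big_map big_enum /=; under eq_bigr do rewrite vol.
by apply: le_trans (grid_volume_le N t0 trho (ltW h0)) _.
Qed.

Lemma ball_box_cover (m : 'rV[R]_d) (rho : R) : (0 < d)%N -> 0 < rho ->
  exists s : seq ('rV[R]_d * 'rV[R]_d),
  [/\ (forall p, p \in s -> forall j, p.1 ord0 j <= p.2 ord0 j),
      (forall x, enorm (x - m) <= rho -> exists2 p, p \in s & box p.1 p.2 x) &
      \sum_(p <- s) box_vol p.1 p.2 <= (cover_const * rho) ^+ d].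
Proof.
move=> d0 rho0.
have dh0 : 0 < Num.sqrt (d%:R / 2 : R) by rewrite sqrtr_gt0 divr_gt0 // ltr0n.
set st := Num.sqrt (d%:R / 2 : R) / rho.
have st0 : 0 < st by rewrite divr_gt0.
set t := st ^+ 2.
have t0 : 0 < t by rewrite exprn_gt0.
have sqt : Num.sqrt t = st by rewrite sqrtr_sqr ger0_norm // ltW.
have trho : t * rho ^+ 2 = d%:R / 2.
  rewrite /t /st exprMn exprVn sqr_sqrtr ?divr_ge0 ?ler0n //.
  by rewrite mulrVK // unitfE sqrf_eq0 gt_eqF.
set s0 := gauss_slack / 2.
have s00 : 0 < s0 by rewrite divr_gt0 // expR_gt0.
set h := s0 / Num.sqrt t.
have h0 : 0 < h by rewrite divr_gt0 // sqt.
set K := Num.truncn (rho / h).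
have /andP[K1 K2] : (K%:R <= rho / h < K.+1%:R) by rewrite truncn_itv // divr_ge0 // ltW.
have hK : K%:R * h <= rho by rewrite -ler_pdivlMr.
have hN : rho < K.+1%:R * h by rewrite -ltr_pdivrMr.
have [s [s_box s_cover s_vol]] := grid_ball_cover m h0 hN (ltW t0) trho.
exists s; split => //; apply: le_trans s_vol _.
have := gauss_cell_sum_le s00 t0 hK.
rewrite -/h sqt /st divfK ?gt_eqF // -/gauss_slack.
rewrite (_ : _ + 2 * s0 - _ = Num.sqrt pi - gauss_slack); last by rewrite /s0; field.
move=> hsum.
have -> : cover_const * rho = expR 2^-1 * ((Num.sqrt pi - gauss_slack) / st).
  by rewrite /cover_const /st; field; rewrite ?gt_eqF.
have hsum0 : 0 <= h * \sum_(k < K.+1 + K.+1) expR (- t * (h * cell_near k) ^+ 2).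
  by apply: mulr_ge0; [exact: ltW | apply: sumr_ge0 => k _; exact: expR_ge0].
apply: lerXn2r; rewrite ?nnegrE.
- exact: mulr_ge0 (expR_ge0 _) hsum0.
- exact: mulr_ge0 (expR_ge0 _) (le_trans hsum0 hsum).
- by rewrite ler_wpM2l ?expR_ge0.
Qed.

Lemma set_radius_approx (D : set 'rV[R]_d) (y0 : 'rV[R]_d) : D y0 -> bounded_setE D ->
  exists r : R, [/\ set_radius D = r%:E, 0 <= r &
    forall e, 0 < e -> exists c, forall y, D y -> enorm (y - c) <= r + e].
Proof.
move=> Dy0 [M hM].
have ub : (set_radius D <= M%:E)%E.
  apply: ge_ereal_inf; exists (ereal_sup [set (enorm (y - 0))%:E | y in D]).
    by exists 0.
  by apply: ge_ereal_sup => _ [y Dy <-]; rewrite lee_fin subr0; exact: hM.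
have r0 : (0 <= set_radius D)%E.
  apply: le_ereal_inf_tmp => _ [x _ <-]; apply: le_ereal_sup_tmp.
  by exists (enorm (y0 - x))%:E; [exists y0 | rewrite lee_fin enorm_ge0].
have fr : set_radius D \is a fin_num by rewrite ge0_fin_numE // (le_lt_trans ub) ?ltry.
exists (fine (set_radius D)); split; first by rewrite fineK.
  by rewrite -lee_fin fineK.
move=> e e0.
have : (set_radius D < (fine (set_radius D) + e)%:E)%E.
  by rewrite -[X in (X < _)%E](fineK fr) lte_fin ltrDl.
move/ereal_inf_lt => [_ [c _ <-]] hc.
exists c => y Dy; rewrite -lee_fin; apply: ltW; apply: le_lt_trans hc.
by apply: ereal_sup_ubound; exists y.
Qed.

Lemma thicken_approx (A : set 'rV[R]_d) (delta e : R) z : 0 < e ->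
  thicken A delta z -> exists2 y, A y & enorm (z - y) <= delta * Num.sqrt d%:R + e.
Proof.
move=> e0 hz.
have : (Defs.edist z A < ((delta * Num.sqrt d%:R + e)%R)%:E)%E.
  by apply: le_lt_trans hz _; rewrite lte_fin ltrDl.
by move/ereal_inf_lt => [_ [y Ay <-]]; rewrite lte_fin => /ltW; exists y.
Qed.

Lemma thicken_conv_hull_near_midpoint n (x : 'I_n -> 'rV[R]_d) (c z : 'rV[R]_d)
    (r delta e : R) :
  0 < e -> (forall i, enorm (x i - c) <= r) -> thicken (conv_hull x) delta z ->
  exists i, enorm (z - 2^-1 *: (c + x i)) <= r / 2 + delta * Num.sqrt d%:R + e.
Proof.
move=> e0 hx /(thicken_approx e0)[y hy hzy].
have [i hi] := conv_hull_near_midpoint hx hy.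
exists i; rewrite -(subrK y z) -addrA.
by apply: le_trans (enormD _ _) _; lra.
Qed.

Lemma leb_outer_le_boxes (A : set 'rV[R]_d) (s : seq ('rV[R]_d * 'rV[R]_d)) :
  (0 < d)%N ->
  (forall p, p \in s -> forall j, p.1 ord0 j <= p.2 ord0 j) ->
  (forall x, A x -> exists2 p, p \in s & box p.1 p.2 x) ->
  (leb_outer A <= (\sum_(p <- s) box_vol p.1 p.2)%:E)%E.
Proof.
move=> d0 hs hA.
pose a k := (nth (0, 0) s k).1; pose b k := (nth (0, 0) s k).2.
have hab k j : a k ord0 j <= b k ord0 j.
  rewrite /a /b; case: (ltnP k (size s)) => hk; first by apply: hs; exact: mem_nth.
  by rewrite nth_default.
have vol00 : box_vol (0 : 'rV[R]_d) 0 = 0.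
  rewrite /box_vol (eq_bigr (fun _ => 0)); last by move=> j _; rewrite !mxE subrr.
  by rewrite prodr_const card_ord expr0n /= gtn_eqF.
apply: ge_ereal_inf; exists (\sum_(0 <= k <oo) (box_vol (a k) (b k))%:E)%E.
  exists a, b; split => // x /hA[p ps bx].
  by exists (index p s) => //; rewrite /a /b nth_index.
rewrite (nneseries_split 0 (size s)); last first.
  by move=> k _; rewrite lee_fin /box_vol; apply: prodr_ge0 => j _; rewrite subr_ge0.
rewrite eseries0; last by move=> k; rewrite add0n => hk _; rewrite /a /b nth_default // vol00.
by rewrite adde0 sumEFin lee_fin (big_nth (0, 0)) add0n.
Qed.

Lemma leb_outer_le_balls n (A : set 'rV[R]_d) (m : 'I_n -> 'rV[R]_d) (rho : R) :
  (0 < d)%N -> 0 < rho -> (forall z, A z -> exists i, enorm (z - m i) <= rho) ->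
  (leb_outer A <= (n%:R * (cover_const * rho) ^+ d)%:E)%E.
Proof.
move=> d0 rho0 hA.
have [f hf] := fin_all_exists (fun i => ball_box_cover (m i) d0 rho0).
pose S := flatten [seq f i | i <- enum 'I_n].
apply: (@le_trans _ _ (\sum_(p <- S) box_vol p.1 p.2)%:E).
  apply: leb_outer_le_boxes => //.
    by move=> p /flattenP[s /mapP[i _ ->] ps]; case: (hf i) => + _ _; exact.
  move=> z /hA[i hi]; case: (hf i) => _ /(_ z hi)[p ps bp] _.
  exists p => //; apply/flattenP; exists (f i) => //.
  by apply: map_f; rewrite mem_enum.
rewrite lee_fin /S big_flatten /= big_map big_enum /=.
apply: le_trans (_ : \sum_(i in 'I_n) (cover_const * rho) ^+ d <= _).
  by apply: ler_sum => i _; case: (hf i).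
by rewrite sumr_const card_ord mulr_natl.
Qed.

End ball_in_dim.
End ball_cover.

Unset Implicit Arguments.

Theorem theorem2p1 (R : realType) (d n : nat) (D : set 'rV[R]_d)
  (x : 'I_n -> 'rV[R]_d) (delta : R) :
  (0 < d)%N -> (0 < n)%N ->
  bounded_setE D ->
  caratheodory_measurable (@leb_outer R d) D ->
  leb_outer D = 1%E ->
  (forall i, D (x i)) ->
  0 < delta ->
  (leb_outer (thicken (conv_hull x) delta) <
   ((n%:R * (((fine (set_radius D) / Num.sqrt d%:R) + 2 * delta) *
             Num.sqrt (pi * expR 1 / 2)) ^+ d))%:E)%E.
Proof.
move=> d0 n0 hD _ _ hx delta0.
have [r [-> r0 hcenter]] := set_radius_approx (hx (Ordinal n0)) hD.
have sd0 : 0 < Num.sqrt d%:R :> R by rewrite sqrtr_gt0 ltr0n.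
pose C : R := 2 / Num.sqrt d%:R * Num.sqrt (pi * expR 1 / 2).
pose rho := r / 2 + delta * Num.sqrt d%:R.
have rho0 : 0 < rho by rewrite ltr_wpDl ?divr_ge0 ?mulr_gt0.
have -> : (r / Num.sqrt d%:R + 2 * delta) * Num.sqrt (pi * expR 1 / 2) = C * rho.
  by rewrite /C /rho; field; rewrite gt_eqF.
have [e e0 slack] := exists_mul_slack (cover_const_ge0 R d) (cover_const_lt R d0) rho0.
have e20 : 0 < e / 2 by rewrite divr_gt0.
have [c hc] := hcenter _ e20.
apply: le_lt_trans
  (leb_outer_le_balls (m := fun i => 2^-1 *: (c + x i)) (rho := rho + e) d0 _ _) _.
- by rewrite addr_gt0.
- move=> z /(thicken_conv_hull_near_midpoint e20 (fun i => hc _ (hx i)))[i hi].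
  by exists i; apply: le_trans hi _; rewrite /rho; lra.
rewrite lte_fin ltr_pM2l ?ltr0n // ltrXn2r ?gtn_eqF //.
by rewrite mulr_ge0 ?cover_const_ge0 // ltW // addr_gt0.
Qed.
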